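(* For each $j\ge0$ the polynomial $c_j(q)$ has degree $j$, leading coefficient $(-1)^jj!\,G_j$ and constant term $B_j$. Moreover, in $\mathbb Q[q][[t]]$, \[ \sum_{j\ge0}c_j(q)\frac{t^j}{j!}=\frac{t}{(1-qt)^{-1/q}-1}. \]
   Context: Let $q$ be a variable. For $a$ in a commutative ring, $k$ in it and $i\in\mathbb N_0$, $(a)_{k,i}=a(a+k)\cdots(a+(i-1)k)$ (with $(a)_{k,0}=1$). The sequence $(c_i(q))_{i\ge0}$ in $\mathbb Q[q]$ is defined recursively by $\sum_{i=0}^{j}\frac{(1)_{q,j+1-i}}{(j+1-i)!}\frac{c_i(q)}{i!}=\delta_{j,0}$ for all $j\ge0$ (so $c_0=1$). The Bernoulli numbers $B_j$ are defined by $\sum_{i=0}^{j}\binom{j+1}{i}B_i=\delta_{j,0}$ for $j\ge0$. The Gregory coefficients $G_j$ are defined by $\sum_{j\ge0}G_jt^j=t/\ln(1+t)$ (so $G_0=1$, $G_1=1/2$, $G_2=-1/12$). *)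

From mathcomp Require Import all_boot all_order all_algebra.
Set Implicit Arguments.
Unset Strict Implicit.
Unset Printing Implicit Defensive.
Import Order.TTheory GRing.Theory Num.Theory.
Local Open Scope ring_scope.

(* Formal power series in t with coefficients in R are represented by their
   coefficient sequences nat -> R. *)

Definition smul (R : comPzRingType) (A B : nat -> R) : nat -> R :=
  fun n => \sum_(i < n.+1) A i * B (n - i)%N.

Definition sderiv (R : comPzRingType) (A : nat -> R) : nat -> R :=
  fun n => A n.+1 *+ n.+1.

Definition sone (R : comPzRingType) : nat -> R := fun n => (n == 0%N)%:R.
Definition st (R : comPzRingType) : nat -> R := fun n => (n == 1%N)%:R.

Definition poch (R : comPzRingType) (a k : R) (i : nat) : R :=
  \prod_(l < i) (a + k *+ l).

Definition ln1p_coef (n : nat) : rat :=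
  if n is m.+1 then (-1) ^+ m / n%:R else 0.

(* Put a_j = c_j / j! and Q_k = (1)_{q,k} / k!.  The defining recursion of the c_j says
   (\sum_k Q_k t^k - 1) (\sum_j a_j t^j) = t, and \sum_k Q_k t^k is the unique solution of
   (1 - q t) F' = F, F(0) = 1, because (k + 1) Q_(k+1) = (1 + k q) Q_k.  Since Q_(k+1) has
   degree k, top coefficient 1/(k+1) and constant term 1/(k+1)!, induction gives deg a_j <= j,
   and the coefficients of degree j and 0 of the recursion are unitriangular systems for the
   top coefficients a_j[j] and the constant terms a_j(0).  The same systems are solved by
   (-1)^j G_j (from G(t) ln(1 + t) = t) and by B_j / j!, so these agree.  Finally deg c_j = j
   because h_j = (-1)^j G_j never vanishes: h_0 = 1, and combining the recursions at n and
   n + 1 gives h_(n+1) = \sum_(i <= n) h_i i / ((n+2)(n+1-i)(n+2-i)), whence h_(n+1) < 0 by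
   induction. *)

From mathcomp Require Import all_boot all_order all_algebra.
From mathcomp Require Import ring zify.
Set Implicit Arguments.
Unset Strict Implicit.
Unset Printing Implicit Defensive.
Import Order.TTheory GRing.Theory Num.Theory.
Local Open Scope ring_scope.

Lemma natr_fact_neq0 (R : numDomainType) n : n`!%:R != 0 :> R.
Proof. by rewrite pnatr_eq0 -lt0n fact_gt0. Qed.

Lemma triangular_sum_inj (R : idomainType) (w : nat -> nat -> R) (d x y : nat -> R) :
  (forall j, w j j != 0) ->
  (forall j, \sum_(i < j.+1) x i * w j i = d j) ->
  (forall j, \sum_(i < j.+1) y i * w j i = d j) ->
  forall j, x j = y j.
Proof.
move=> wjj_neq0 hx hy; elim/ltn_ind=> j IH.
have := hx j; rewrite -(hy j) !big_ord_recr /=.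
under eq_bigr => i _ do rewrite (IH _ (ltn_ord i)).
by move/addrI/mulIf; apply.
Qed.

Lemma size_poly_eq_succ (R : nzRingType) (p : {poly R}) n :
  (size p <= n.+1)%N -> p`_n != 0 -> size p = n.+1.
Proof.
move=> hp pn_neq0; apply/anti_leq; rewrite hp ltnNge.
by apply: contra pn_neq0 => /(nth_default 0) ->.
Qed.

Lemma coefM_size_top (R : nzRingType) (p q : {poly R}) a b :
  (size p <= a.+1)%N -> (size q <= b.+1)%N -> (p * q)`_(a + b) = p`_a * q`_b.
Proof.
move=> hp hq; rewrite coefM.
have ha : (a < (a + b).+1)%N by rewrite ltnS leq_addr.
rewrite (bigD1 (Ordinal ha)) //= addKn big1 ?addr0 // => i /eqP hi.
have [lt_ia | ge_ia] := ltnP i a.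
  by rewrite [q`__]nth_default ?mulr0 //; apply: leq_trans hq _; lia.
rewrite [p`__]nth_default ?mul0r //; apply: leq_trans hp _.
have : i != a :> nat by apply/eqP => e; apply: hi; exact: val_inj.
lia.
Qed.

Lemma poch0 (R : comPzRingType) (a k : R) : poch a k 0 = 1.
Proof. by rewrite /poch big_ord0. Qed.

Lemma pochS (R : comPzRingType) (a k : R) i :
  poch a k i.+1 = poch a k i * (a + k *+ i).
Proof. by rewrite /poch big_ord_recr. Qed.

Section Poch1X.
Variable R : comNzRingType.

Lemma size_1_addXn k : (size (1 + 'X *+ k : {poly R})%R <= 2)%N.
Proof.
rewrite (leq_trans (size_polyD _ _)) // geq_max size_poly1 -scaler_nat.
by rewrite (leq_trans (size_scale_leq _ _)) ?size_polyX.
Qed.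

Lemma size_poch1X k : (size (poch 1 'X k.+1 : {poly R})%R <= k.+1)%N.
Proof.
elim: k => [|k IH]; first by rewrite pochS poch0 mulr0n addr0 mul1r size_poly1.
rewrite pochS (leq_trans (size_polyMleq _ _)) //.
by move: IH (size_1_addXn k.+1); set s := size _; set t := size _; lia.
Qed.

Lemma coef_poch1X_top k : (poch 1 'X k.+1 : {poly R})`_k = k`!%:R.
Proof.
elim: k => [|k IH]; first by rewrite pochS poch0 mulr0n addr0 mul1r coefC.
rewrite pochS; have := coefM_size_top (size_poch1X k) (size_1_addXn k.+1).
rewrite addn1 => ->; rewrite IH.
by rewrite coefD coefMn coefX coefC add0r factS natrM mulrC.
Qed.

Lemma coef0_poch1X k : (poch 1 'X k : {poly R})`_0 = 1.
Proof.
elim: k => [|k IH]; first by rewrite poch0 coefC.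
by rewrite pochS coef0M IH coefD coefMn coefX coefC mul0rn addr0 mulr1.
Qed.

End Poch1X.

Lemma smul_sub_st_sderiv (S : comPzRingType) (q : S) (A : nat -> S) n :
  smul (fun m => sone S m - q * st S m) (sderiv A) n = A n.+1 *+ n.+1 - q * (A n *+ n).
Proof.
rewrite /smul /sone /st /sderiv; case: n => [|n].
  by rewrite big_ord1 !mulr0 !subr0 mul1r.
rewrite 2!big_ord_recl big1 ?addr0 => [|i _]; last by rewrite !mulr0 subr0 mul0r.
by rewrite /= subn0 !mulr0 mulr1 !subr0 mul1r sub0r mulNr /bump subn1.
Qed.

(* The coefficients of (1 - q t)^(-1/q) = \sum_n (1)_{q,n} t^n / n!. *)
Definition qbin (R : numFieldType) (n : nat) : {poly R} := (n`!%:R)^-1 *: poch 1 'X n.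

Section QBin.
Variable R : numFieldType.
Implicit Type F : nat -> {poly R}.

Lemma qbin0 : qbin R 0 = 1.
Proof. by rewrite /qbin poch0 invr1 scale1r. Qed.

Lemma qbin1 : qbin R 1 = 1.
Proof. by rewrite /qbin pochS poch0 mulr0n addr0 mul1r invr1 scale1r. Qed.

Lemma size_qbin k : (size (qbin R k.+1) <= k.+1)%N.
Proof. exact: leq_trans (size_scale_leq _ _) (size_poch1X _ _). Qed.

Lemma coef_qbin_top k : (qbin R k.+1)`_k = (k.+1%:R)^-1.
Proof.
rewrite coefZ coef_poch1X_top factS natrM invfM -mulrA mulVf ?mulr1 //.
exact: natr_fact_neq0.
Qed.

Lemma coef0_qbin k : (qbin R k)`_0 = (k`!%:R)^-1.
Proof. by rewrite coefZ coef0_poch1X mulr1. Qed.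

Lemma qbin_ode n : qbin R n.+1 *+ n.+1 - 'X * (qbin R n *+ n) = qbin R n.
Proof.
have -> : qbin R n.+1 *+ n.+1 = qbin R n * (1 + 'X *+ n).
  rewrite /qbin pochS -scaler_nat scalerA factS natrM invfM mulrA mulfV ?pnatr_eq0 //.
  by rewrite mul1r scalerAl.
ring.
Qed.

Lemma qbin_unique F :
  F 0%N = 1 ->
  (forall n, smul (fun m => sone _ m - 'X * st _ m) (sderiv F) n = F n) ->
  F =1 qbin R.
Proof.
move=> F0 hF; elim=> [|n IH]; first by rewrite F0 qbin0.
have := hF n; rewrite smul_sub_st_sderiv IH -[RHS](qbin_ode n) => /addIr.
by rewrite -!scaler_nat; apply: scalerI; rewrite pnatr_eq0.
Qed.

End QBin.

Lemma coef_natb (R : nzRingType) (b : bool) k :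
  (b%:R : {poly R})`_k = (b && (k == 0%N))%:R.
Proof. by rewrite -polyC_natr coefC; case: (k == 0%N); case: b. Qed.

Definition egf (R : numFieldType) (c : nat -> {poly R}) (j : nat) : {poly R} :=
  (j`!%:R)^-1 *: c j.

Section EGF.
Variables (R : numFieldType) (c : nat -> {poly R}).
Local Notation a := (egf c).
Hypothesis hc : forall j, \sum_(i < j.+1) qbin R (j.+1 - i) * a i = (j == 0%N)%:R.

Lemma size_egf_le j : (size (a j) <= j.+1)%N.
Proof.
elim/ltn_ind: j => j IH.
have /eqP := hc j; rewrite big_ord_recr /= subSnn qbin1 mul1r addrC eq_sym -subr_eq.
move=> /eqP <-; rewrite (leq_trans (size_polyD _ _)) // geq_max size_polyN.
rewrite -polyC_natr size_polyC (leq_trans (leq_b1 _)) //=.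
apply: leq_trans (size_sum _ _ _) _; apply/bigmax_leqP => i _ /=.
rewrite (leq_trans (size_polyMleq _ _)) // (subSn (ltnW (ltn_ord i))).
have := ltn_ord i; move: (size_qbin R (j - i)) (IH i (ltn_ord i)).
by set s := size (qbin R _); set t := size (a _); lia.
Qed.

Lemma egf_top_rec j : \sum_(i < j.+1) (a i)`_i / (j.+1 - i)%:R = (j == 0%N)%:R.
Proof.
rewrite -[j == 0%N]andbb -coef_natb -(hc j) coef_sum.
apply: eq_bigr => -[i /= lt_ij] _.
rewrite ltnS in lt_ij.
have := coefM_size_top (size_qbin R (j - i)) (size_egf_le i).
by rewrite subnK // subSn // => ->; rewrite coef_qbin_top mulrC.
Qed.

Lemma egf_coef0_rec j : \sum_(i < j.+1) (a i)`_0 / (j.+1 - i)`!%:R = (j == 0%N)%:R.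
Proof.
rewrite -[j == 0%N]andbT -(coef_natb R _ 0) -(hc j) coef_sum.
by apply: eq_bigr => i _; rewrite coef0M coef0_qbin mulrC.
Qed.

Lemma smul_egf_qbin n : smul a (fun m => qbin R m - sone _ m) n = st _ n.
Proof.
rewrite /smul; case: n => [|n]; first by rewrite big_ord1 qbin0 subrr mulr0.
rewrite big_ord_recr /= subnn qbin0 subrr mulr0 addr0 /st /= -hc.
apply: eq_bigr => -[i /= lt_in] _; rewrite ltnS in lt_in.
by rewrite /sone subSn // subr0 mulrC.
Qed.

End EGF.

Lemma bernoulli_egf_rec (R : numFieldType) (B : nat -> R) :
  (forall j, \sum_(i < j.+1) 'C(j.+1, i)%:R * B i = (j == 0%N)%:R) ->
  forall j, \sum_(i < j.+1) B i / i`!%:R / (j.+1 - i)`!%:R = (j == 0%N)%:R.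
Proof.
move=> hB j.
have -> : (j == 0%N)%:R = (j == 0%N)%:R / (j.+1)`!%:R :> R.
  by case: j => [|j]; rewrite ?mul0r // invr1 mulr1.
rewrite -hB mulr_suml; apply: eq_bigr => -[i /= lt_ij] _.
have /(congr1 (GRing.natmul (1 : R))) := bin_fact (ltnW lt_ij); rewrite !natrM => <-.
have binj_neq0 : 'C(j.+1, i)%:R != 0 :> R by rewrite pnatr_eq0 -lt0n bin_gt0 ltnW.
by field; rewrite binj_neq0 !natr_fact_neq0.
Qed.

Lemma signr_sub (R : unitRingType) m i : (i <= m)%N ->
  (-1) ^+ (m - i) = (-1) ^+ m * (-1) ^+ i :> R.
Proof. by move=> le_im; rewrite exprB ?unitrN1 // invr_sign. Qed.

Lemma signed_gregory_rec (G : nat -> rat) :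
  (forall n, smul G ln1p_coef n = st rat n) ->
  forall m, \sum_(i < m.+1) (-1) ^+ i * G i / (m.+1 - i)%:R = (m == 0%N)%:R.
Proof.
move=> hG m.
have := hG m.+1; rewrite /smul big_ord_recr subnn /= mulr0 addr0 /st eqSS => hm.
have -> : (m == 0%N)%:R = (-1) ^+ m * (m == 0%N)%:R :> rat.
  by case: m {hm} => [|m]; rewrite ?mulr1 ?mulr0.
rewrite -hm mulr_sumr; apply: eq_bigr => -[i /= lt_im] _; rewrite ltnS in lt_im.
rewrite (subSn lt_im) /ln1p_coef (signr_sub _ lt_im).
by rewrite -!mulrA (mulrCA (G i)) signrMK mulrCA.
Qed.

Lemma inv_succ_weightE (R : numFieldType) n i : (i <= n)%N ->
  n.+1%:R / n.+2%:R / (n.+1 - i)%:R - ((n.+2 - i)%:R)^-1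
  = i%:R / (n.+2%:R * (n.+1 - i)%:R * (n.+2 - i)%:R) :> R.
Proof.
move=> le_in; rewrite -(subnK le_in); move: (n - i)%N => k.
rewrite -!addSn !addnK !natrD -[k.+2%:R]natr1.
by field; rewrite !nat1r !natr1 -natrD !pnatr_eq0.
Qed.

(* The hypothesis says (\sum_i h_i t^i) (-ln(1 - t) / t) = 1. *)
Section RecipLog.
Variables (R : numFieldType) (h : nat -> R).
Hypothesis hrec : forall m, \sum_(i < m.+1) h i / (m.+1 - i)%:R = (m == 0%N)%:R.

Lemma recip_log_coef0 : h 0%N = 1.
Proof. by have := hrec 0; rewrite big_ord1 divr1. Qed.

Lemma recip_log_coef_succE n : (0 < n)%N ->
  h n.+1 = \sum_(i < n.+1) h i * (i%:R / (n.+2%:R * (n.+1 - i)%:R * (n.+2 - i)%:R)).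
Proof.
move=> n_gt0; have := hrec n; rewrite (gtn_eqF n_gt0) /= => hn.
have /eqP := hrec n.+1; rewrite big_ord_recr /= subSnn divr1 addrC addr_eq0 => /eqP ->.
transitivity (n.+1%:R / n.+2%:R * \sum_(i < n.+1) h i / (n.+1 - i)%:R
              - \sum_(i < n.+1) h i / (n.+2 - i)%:R).
  by rewrite hn mulr0 add0r.
rewrite mulr_sumr -sumrB.
apply: eq_bigr => -[i /=]; rewrite ltnS => le_in _.
by rewrite -inv_succ_weightE // mulrBr mulrCA mulrA.
Qed.

Lemma recip_log_coef_lt0 n : h n.+1 < 0.
Proof.
elim/ltn_ind: n => -[_ | n IH].
  have := hrec 1; rewrite big_ord_recr big_ord1 recip_log_coef0 divr1 /= => /eqP.
  by rewrite addrC addr_eq0 => /eqP ->; rewrite oppr_lt0 mul1r invr_gt0 ltr0n.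
rewrite recip_log_coef_succE // big_ord_recr /=; apply: ltr_wnDl.
  apply: sumr_le0 => -[[|i] /= lt_in] _; first by rewrite mul0r mulr0.
  apply: mulr_le0_ge0; first exact/ltW/IH/ltnW.
  by rewrite divr_ge0 ?mulr_ge0 ?ler0n.
rewrite nmulr_rlt0 ?IH // divr_gt0 ?mulr_gt0 ?ltr0n ?subn_gt0 //.
Qed.

End RecipLog.

Theorem lemma4p2 (c : nat -> {poly rat}) (B G : nat -> rat)
  (hc : forall j : nat,
     \sum_(i < j.+1)
        (((j.+1 - i)`!%:R)^-1 *: poch 1 'X (j.+1 - i)) * ((i`!%:R)^-1 *: c i)
     = (j == 0%N)%:R)
  (hB : forall j : nat, \sum_(i < j.+1) 'C(j.+1, i)%:R * B i = (j == 0%N)%:R)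
  (hG : forall n : nat, smul G ln1p_coef n = st rat n) :
  (forall j : nat,
     size (c j) = j.+1 /\
     lead_coef (c j) = (-1) ^+ j * j`!%:R * G j /\
     (c j)`_0 = B j) /\
  (* (1 - q t)^(-1/q): the unique series F with F(0) = 1 and (1 - q t) F' = F *)
  (exists F : nat -> {poly rat},
     F 0%N = 1 /\
     forall n, smul (fun m => sone _ m - 'X * st _ m) (sderiv F) n = F n) /\
  (forall F : nat -> {poly rat},
     F 0%N = 1 ->
     (forall n, smul (fun m => sone _ m - 'X * st _ m) (sderiv F) n = F n) ->
     (* sum_j c_j t^j / j!  *  ((1 - q t)^(-1/q) - 1)  =  t *)
     forall n,
       smul (fun j => (j`!%:R)^-1 *: c j) (fun m => F m - sone _ m) n
       = st _ n).
Proof.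
pose g i : rat := (-1) ^+ i * G i.
have g_rec : forall m, \sum_(i < m.+1) g i / (m.+1 - i)%:R = (m == 0%N)%:R.
  exact: signed_gregory_rec.
have c_eq j : c j = j`!%:R *: egf c j by rewrite scalerA mulfV ?scale1r ?natr_fact_neq0.
have egf_top : forall j, (egf c j)`_j = g j.
  apply: (triangular_sum_inj (w := fun j i => ((j.+1 - i)%:R)^-1) _ (egf_top_rec hc) g_rec).
  by move=> j; rewrite subSnn invr1 oner_neq0.
have egf_coef0 : forall j, (egf c j)`_0 = B j / j`!%:R.
  apply: (triangular_sum_inj (w := fun j i => ((j.+1 - i)`!%:R)^-1) _ (egf_coef0_rec hc)
           (bernoulli_egf_rec hB)).
  by move=> j; rewrite subSnn invr1 oner_neq0.
have egf_top_neq0 j : (egf c j)`_j != 0.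
  rewrite egf_top; case: j => [|j]; first by rewrite (recip_log_coef0 g_rec) oner_neq0.
  exact: ltr0_neq0 (recip_log_coef_lt0 g_rec j).
split; [move=> j | split].
- have size_egf : size (egf c j) = j.+1.
    by apply: size_poly_eq_succ; [exact: size_egf_le hc j | exact: egf_top_neq0].
  rewrite c_eq size_scale ?natr_fact_neq0 // lead_coefZ lead_coefE size_egf succnK.
  rewrite egf_top coefZ egf_coef0; split=> //; split.
    by rewrite /g mulrCA mulrA.
  by rewrite mulrC divfK ?natr_fact_neq0.
- exists (qbin rat); split; first exact: qbin0.
  by move=> n; rewrite smul_sub_st_sderiv qbin_ode.
- move=> F F0 hF n; rewrite -(smul_egf_qbin hc n).
  by apply: eq_bigr => i _; rewrite (qbin_unique F0 hF).
Qed.
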